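(* Let $(\varphi,\tau_0)\in C((-\infty,0],C(\Omega))\times C_+(\Omega)$, $r\in(0,+\infty]$, $A\in C((-\infty,r),C(\Omega))$ with $A=\varphi$ on $(-\infty,0]$, and let $\tau$ be the solution of (3.1). Assume there is $M>0$ with $\sup_{t\in[0,r)}\|A(t,\cdot)\|_\infty\le M$. Set $\tau_0^\infty:=\sup_{x}\tau_0(x)$, $\varphi_{\max}:=\sup_{t\in[-\tau_0^\infty,0]}\|\varphi(t,\cdot)\|_\infty$, $M_1:=\max\{M,\varphi_{\max}\}$, and $$\tau_{\min}:=\frac{\inf_{x\in\Omega}[\tau_0(x)f(\varphi_{\max})(x)]}{\sup_{x\in\Omega}f(-M_1)(x)},\qquad \tau_{\max}:=\frac{\sup_{x\in\Omega}[\tau_0(x)f(-\varphi_{\max})(x)]}{\inf_{x\in\Omega}f(M_1)(x)}.$$ Then $0\le\tau_{\min}\le\tau(t,x)\le\tau_{\max}$ for all $t\in[0,r)$ and $x\in\Omega$.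
   Context: $\Omega\subset\mathbb R^n$ compact, $C(\Omega)$ with sup norm, $C_+(\Omega)$ nonnegative functions. $f:C(\Omega)\to C(\Omega)$ is Lipschitz, $0<f(\phi)(x)\le M_f$ for a constant $M_f$, non-increasing for the pointwise order. A real constant $c$ is identified with the constant function $c$ on $\Omega$, so $f(c)\in C(\Omega)$. Equation (3.1): $\int_{t-\tau(t,x)}^tf(A(s,\cdot))(x)ds=\int_{-\tau_0(x)}^0f(\varphi(s,\cdot))(x)ds$ for $t\in[0,r)$, $x\in\Omega$; it has a unique solution $\tau:[0,r)\to C(\Omega)$ with $\tau\ge0$. *)

From Stdlib Require Import Reals Lra List ClassicalEpsilon.
Open Scope R_scope.

(* Points of R^n are represented as nat -> R whose coordinates of index >= n vanish. *)
Definition eucl_dist (n : nat) (x y : nat -> R) : R :=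
  sqrt (fold_right Rplus 0 (map (fun i => (x i - y i) ^ 2) (seq 0 n))).

Definition compact_in_Rn (n : nat) (Omega : (nat -> R) -> Prop) : Prop :=
  (forall x, Omega x -> forall i, (n <= i)%nat -> x i = 0) /\
  (forall u : nat -> (nat -> R), (forall k, Omega (u k)) ->
     exists phi : nat -> nat, (forall k, (phi k < phi (S k))%nat) /\
       exists l, Omega l /\
         forall eps, 0 < eps -> exists N : nat, forall k, (N <= k)%nat ->
           eucl_dist n (u (phi k)) l < eps).

(* Supremum / infimum of a set of reals (meaningful when the lub exists). *)
Definition Rsup (E : R -> Prop) : R := epsilon (inhabits 0) (fun s => is_lub E s).
Definition Rinf (E : R -> Prop) : R := - Rsup (fun y => E (- y)).

(* Elements of C(Omega) are represented by functions on the subtype {x | Omega x}. *)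
Definition contC {Omega : (nat -> R) -> Prop} (n : nat) (u : sig Omega -> R) : Prop :=
  forall x eps, 0 < eps -> exists delta, 0 < delta /\
    forall y, eucl_dist n (proj1_sig x) (proj1_sig y) < delta ->
      Rabs (u x - u y) < eps.

Definition supnorm {Omega : (nat -> R) -> Prop} (u : sig Omega -> R) : R :=
  Rsup (fun y => exists x, y = Rabs (u x)).

Definition constC {Omega : (nat -> R) -> Prop} (c : R) : sig Omega -> R := fun _ => c.

Definition cont_into_C {Omega : (nat -> R) -> Prop} (n : nat) (D : R -> Prop)
  (g : R -> sig Omega -> R) : Prop :=
  (forall t, D t -> contC n (g t)) /\
  (forall t0, D t0 -> forall eps, 0 < eps -> exists delta, 0 < delta /\
     forall t, D t -> Rabs (t - t0) < delta ->
       supnorm (fun x => g t x - g t0 x) < eps).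

(* r in (0, +infinity]: None stands for +infinity *)
Definition below (r : option R) (t : R) : Prop :=
  match r with Some r' => t < r' | None => True end.
Definition pos_ext (r : option R) : Prop :=
  match r with Some r' => 0 < r' | None => True end.

(* Along the lag window [t - tau(t,x), t] the history A stays in [-M1, M1], and along
   [-tau0(x), 0] the initial history phi stays in [-phi_max, phi_max].  As f is
   nonincreasing, the two sides of (3.1) are squeezed between tau f(M1) and tau f(-M1),
   resp. tau0 f(phi_max) and tau0 f(-phi_max); comparing them bounds tau.  The window
   lies where these bounds are available because t - tau(t,x) >= -tau0(x): otherwise
   the left-hand side would exceed the right-hand side by the integral of the positive
   function f(phi(s))(x) over [t - tau, -tau0]. *)

From Stdlib Require Import Reals Lra Lia ZArith List.
From Stdlib Require Import Classical ClassicalEpsilon FunctionalExtensionality.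
Open Scope R_scope.

Lemma Rsup_is_lub (E : R -> Prop) : bound E -> (exists x, E x) -> is_lub E (Rsup E).
Proof.
  intros Hb Hne. destruct (completeness E Hb Hne) as [m Hm].
  unfold Rsup. apply epsilon_spec. now exists m.
Qed.

Lemma Rsup_upper (E : R -> Prop) z : bound E -> E z -> z <= Rsup E.
Proof. intros Hb Hz. now apply (Rsup_is_lub E Hb (ex_intro _ z Hz)). Qed.

Lemma Rsup_least (E : R -> Prop) B :
  (exists x, E x) -> (forall z, E z -> z <= B) -> Rsup E <= B.
Proof. intros Hne Hb. now apply (Rsup_is_lub E (ex_intro _ B Hb) Hne). Qed.

Section RangeBounds.
Variables (T : Type) (g : T -> R) (B : R).

Lemma le_Rsup_range x : (forall y, g y <= B) -> g x <= Rsup (fun z => exists y, z = g y).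
Proof.
  intros HB. apply Rsup_upper; [exists B; intros z [y ->]; apply HB | now exists x].
Qed.

Lemma Rsup_range_le : inhabited T -> (forall y, g y <= B) ->
  Rsup (fun z => exists y, z = g y) <= B.
Proof.
  intros [y0] HB. apply Rsup_least; [now exists (g y0), y0 | intros z [y ->]; apply HB].
Qed.

Lemma Rinf_range_le x : (forall y, B <= g y) -> Rinf (fun z => exists y, z = g y) <= g x.
Proof.
  intros HB. unfold Rinf.
  enough (- g x <= Rsup (fun z => exists y, - z = g y)) by lra.
  apply Rsup_upper; [exists (- B); intros z [y Hy]; specialize (HB y); lra | exists x; lra].
Qed.

Lemma le_Rinf_range : inhabited T -> (forall y, B <= g y) ->
  B <= Rinf (fun z => exists y, z = g y).
Proof.
  intros [y0] HB. unfold Rinf.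
  enough (Rsup (fun z => exists y, - z = g y) <= - B) by lra.
  apply Rsup_least; [exists (- g y0), y0; lra | intros z [y Hy]; specialize (HB y); lra].
Qed.

End RangeBounds.

Lemma Rabs_le_supnorm {Omega : (nat -> R) -> Prop} (u : sig Omega -> R) B x :
  (forall y, Rabs (u y) <= B) -> Rabs (u x) <= supnorm u.
Proof. apply (le_Rsup_range _ (fun y => Rabs (u y))). Qed.

Lemma supnorm_le {Omega : (nat -> R) -> Prop} (u : sig Omega -> R) B :
  inhabited (sig Omega) -> (forall y, Rabs (u y) <= B) -> supnorm u <= B.
Proof. apply (Rsup_range_le _ (fun y => Rabs (u y))). Qed.

Section ContC.
Variables (n : nat) (Omega : (nat -> R) -> Prop).

Lemma contC_const c : contC n (@constC Omega c).
Proof.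
  intros x eps Heps. exists 1. split; [lra|]. intros y _. unfold constC.
  rewrite Rminus_diag_eq, Rabs_R0; auto.
Qed.

Lemma contC_sub (u v : sig Omega -> R) :
  contC n u -> contC n v -> contC n (fun x => u x - v x).
Proof.
  intros Hu Hv x eps Heps.
  destruct (Hu x (eps / 2)) as [du [Hdu Hu']]; [lra|].
  destruct (Hv x (eps / 2)) as [dv [Hdv Hv']]; [lra|].
  exists (Rmin du dv). split; [now apply Rmin_glb_lt|]. intros y Hy.
  specialize (Hu' y (Rlt_le_trans _ _ _ Hy (Rmin_l du dv))).
  specialize (Hv' y (Rlt_le_trans _ _ _ Hy (Rmin_r du dv))).
  pose proof (Rabs_triang (u x - u y) (- (v x - v y))) as Htri.
  rewrite Rabs_Ropp in Htri.
  replace (u x - v x - (u y - v y)) with (u x - u y + - (v x - v y)) by ring. lra.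
Qed.

Lemma contC_Rabs (u : sig Omega -> R) : contC n u -> contC n (fun x => Rabs (u x)).
Proof.
  intros Hu x eps Heps. destruct (Hu x eps Heps) as [d [Hd Hu']].
  exists d. split; [exact Hd|]. intros y Hy.
  eapply Rle_lt_trans; [apply Rabs_triang_inv2 | now apply Hu'].
Qed.

End ContC.

Lemma INR_unbounded (B : R) : exists N : nat, B < INR N.
Proof.
  destruct (archimed B) as [Hup _]. exists (Z.abs_nat (up B)).
  rewrite INR_IZR_INZ, Zabs2Nat.id_abs, Z.abs_max.
  apply Rlt_le_trans with (IZR (up B)); [exact Hup|]. apply IZR_le, Z.le_max_l.
Qed.

Section Compact.
Variables (n : nat) (Omega : (nat -> R) -> Prop).
Hypothesis HOmega : compact_in_Rn n Omega.

Lemma eucl_dist_sym x y : eucl_dist n x y = eucl_dist n y x.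
Proof. unfold eucl_dist. do 2 f_equal. apply map_ext. intros. ring. Qed.

Lemma contC_subseq_cvg (g : sig Omega -> R) (u : nat -> sig Omega) : contC n g ->
  exists (phi : nat -> nat) (l : sig Omega), (forall k, (k <= phi k)%nat) /\
    forall eps, 0 < eps -> exists N, forall k, (N <= k)%nat -> Rabs (g l - g (u (phi k))) < eps.
Proof.
  intros Hg. destruct HOmega as [_ Hseq].
  destruct (Hseq (fun k => proj1_sig (u k)) (fun k => proj2_sig (u k)))
    as [phi [Hphi [l [Hl Hcv]]]].
  exists phi, (exist _ l Hl). split.
  - intro k. induction k as [|k IH]; [lia|]. specialize (Hphi k). lia.
  - intros eps Heps. destruct (Hg (exist _ l Hl) eps Heps) as [d [Hd Hgd]].
    destruct (Hcv d Hd) as [N HN]. exists N. intros k Hk.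
    apply Hgd. simpl. rewrite eucl_dist_sym. now apply HN.
Qed.

Lemma contC_bounded_above (g : sig Omega -> R) : contC n g -> exists B, forall y, g y <= B.
Proof.
  intros Hg. apply NNPP. intros Hunb.
  assert (Hu : forall k : nat, exists y, INR k < g y).
  { intro k. apply NNPP. intros Hk. apply Hunb. exists (INR k). intro y.
    apply Rnot_lt_le. intros Hy. apply Hk. now exists y. }
  destruct (choice _ Hu) as [u Hgu].
  destruct (contC_subseq_cvg g u Hg) as [phi [l [Hphi Hcv]]].
  destruct (Hcv 1 Rlt_0_1) as [N HN].
  destruct (INR_unbounded (g l + 1)) as [N' HN'].
  set (k := max N N').
  specialize (HN k (Nat.le_max_l _ _)). specialize (Hgu (phi k)).
  assert (INR N' <= INR (phi k)).
  { apply le_INR. pose proof (Hphi k). pose proof (Nat.le_max_r N N'). lia. }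
  apply Rabs_def2 in HN. lra.
Qed.

Lemma contC_Rabs_le_supnorm (u : sig Omega -> R) x : contC n u -> Rabs (u x) <= supnorm u.
Proof.
  intros Hu. destruct (contC_bounded_above _ (contC_Rabs n Omega u Hu)) as [B HB].
  now apply Rabs_le_supnorm with B.
Qed.

Lemma contC_le_Rsup_range (g : sig Omega -> R) x :
  contC n g -> g x <= Rsup (fun z => exists y, z = g y).
Proof.
  intros Hg. destruct (contC_bounded_above g Hg) as [B HB]. now apply le_Rsup_range with B.
Qed.

Hypothesis Hinh : inhabited (sig Omega).

(* The maximum is the limit of a subsequence of approximate maximisers [g (u k) > S - 1/(k+1)]. *)
Lemma contC_max (g : sig Omega -> R) : contC n g -> exists xm, forall y, g y <= g xm.
Proof.
  intros Hg. destruct (contC_bounded_above g Hg) as [B HB].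
  set (S := Rsup (fun z => exists y, z = g y)).
  assert (HS : forall y, g y <= S) by (intro y; now apply le_Rsup_range with B).
  assert (Hu : forall k : nat, exists y, S - / (INR k + 1) < g y).
  { intro k. apply NNPP. intros Hk.
    assert (S <= S - / (INR k + 1)).
    { apply Rsup_range_le; [exact Hinh|]. intro y.
      apply Rnot_lt_le. intros Hy. apply Hk. now exists y. }
    assert (0 < / (INR k + 1)) by (apply Rinv_0_lt_compat; pose proof (pos_INR k); lra).
    lra. }
  destruct (choice _ Hu) as [u Hgu].
  destruct (contC_subseq_cvg g u Hg) as [phi [l [Hphi Hcv]]].
  exists l. intro y. apply Rle_trans with S; [apply HS|].
  apply Rnot_lt_le. intros Hlt.
  destruct (Hcv ((S - g l) / 2)) as [N HN]; [lra|].
  destruct (archimed_cor1 ((S - g l) / 2)) as [N' [HN' HN'pos]]; [lra|].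
  set (k := max N N').
  specialize (HN k (Nat.le_max_l _ _)). specialize (Hgu (phi k)).
  assert (INR N' <= INR (phi k)).
  { apply le_INR. pose proof (Hphi k). pose proof (Nat.le_max_r N N'). lia. }
  assert (0 < INR N') by (apply lt_0_INR; lia).
  assert (/ (INR (phi k) + 1) <= / INR N') by (apply Rinv_le_contravar; lra).
  apply Rabs_def2 in HN. lra.
Qed.

Lemma contC_min (g : sig Omega -> R) : contC n g -> exists xm, forall y, g xm <= g y.
Proof.
  intros Hg.
  destruct (contC_max (fun y => constC 0 y - g y)) as [xm Hxm].
  { apply contC_sub; [apply contC_const | exact Hg]. }
  exists xm. intro y. specialize (Hxm y). unfold constC in Hxm. lra.
Qed.

Lemma contC_Rinf_range_pos (g : sig Omega -> R) :
  contC n g -> (forall y, 0 < g y) -> 0 < Rinf (fun z => exists y, z = g y).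
Proof.
  intros Hg Hpos. destruct (contC_min g Hg) as [xm Hxm].
  apply Rlt_le_trans with (g xm); [apply Hpos|]. now apply le_Rinf_range.
Qed.

Lemma contC_supnorm_sub (u v : sig Omega -> R) : contC n u -> contC n v ->
  Rabs (supnorm u - supnorm v) <= supnorm (fun x => u x - v x).
Proof.
  intros Hu Hv.
  assert (Hd : forall y, Rabs (u y - v y) <= supnorm (fun x => u x - v x))
    by (intro y; apply (contC_Rabs_le_supnorm (fun x => u x - v x)), contC_sub; assumption).
  apply Rabs_le. split.
  - enough (supnorm v <= supnorm u + supnorm (fun x => u x - v x)) by lra.
    apply supnorm_le with (1 := Hinh). intro y.
    pose proof (contC_Rabs_le_supnorm u y Hu). specialize (Hd y).
    rewrite Rabs_minus_sym in Hd. pose proof (Rabs_triang (u y) (v y - u y)).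
    replace (u y + (v y - u y)) with (v y) in * by ring. lra.
  - enough (supnorm u <= supnorm v + supnorm (fun x => u x - v x)) by lra.
    apply supnorm_le with (1 := Hinh). intro y.
    pose proof (contC_Rabs_le_supnorm v y Hv). specialize (Hd y).
    pose proof (Rabs_triang (v y) (u y - v y)).
    replace (v y + (u y - v y)) with (u y) in * by ring. lra.
Qed.

Lemma Rclamp_dist a b s c :
  Rabs (Rmax a (Rmin s b) - Rmax a (Rmin c b)) <= Rabs (s - c).
Proof.
  unfold Rmax, Rmin.
  repeat destruct Rle_dec; unfold Rabs; repeat destruct Rcase_abs; lra.
Qed.

(* Clamping to [a, b] turns [s |-> supnorm (g s)] into a function continuous on all of R. *)
Lemma cont_into_C_supnorm_bounded (D : R -> Prop) (g : R -> sig Omega -> R) a b :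
  cont_into_C n D g -> (forall s, a <= s <= b -> D s) ->
  exists K, forall s, a <= s <= b -> supnorm (g s) <= K.
Proof.
  intros [HgC Hgt] HD. destruct (Rle_dec a b) as [Hab|Hba]; [|exists 0; intros s Hs; lra].
  set (cl := fun s => Rmax a (Rmin s b)).
  assert (Hcl : forall s, a <= cl s <= b).
  { intro s. unfold cl, Rmax, Rmin. repeat destruct Rle_dec; lra. }
  set (h := fun s => supnorm (g (cl s))).
  assert (Hh : forall c, continuity_pt h c).
  { intros c eps Heps.
    destruct (Hgt (cl c) (HD _ (Hcl c)) eps Heps) as [d [Hd Hgd]].
    exists d. split; [exact Hd|]. intros s [_ Hs]. simpl in *. unfold R_dist in *.
    eapply Rle_lt_trans;
      [apply contC_supnorm_sub; apply HgC, HD, Hcl | apply Hgd; [apply HD, Hcl|]].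
    eapply Rle_lt_trans; [apply Rclamp_dist | exact Hs]. }
  destruct (continuity_ab_maj h a b Hab (fun c _ => Hh c)) as [m [Hm _]].
  exists (h m). intros s Hs. specialize (Hm s Hs). unfold h, cl in Hm.
  now rewrite Rmin_left, Rmax_right in Hm by lra.
Qed.

Lemma Rabs_le_Rsup_supnorm (D : R -> Prop) (g : R -> sig Omega -> R) a b s y :
  cont_into_C n D g -> (forall s, a <= s <= b -> D s) -> a <= s <= b ->
  Rabs (g s y) <= Rsup (fun z => exists t, a <= t <= b /\ z = supnorm (g t)).
Proof.
  intros Hg HD Hs. destruct (cont_into_C_supnorm_bounded D g a b Hg HD) as [K HK].
  apply Rle_trans with (supnorm (g s)).
  - apply contC_Rabs_le_supnorm, (proj1 Hg), HD, Hs.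
  - apply Rsup_upper; [exists K; intros z [t [Ht ->]]; auto | eauto].
Qed.

End Compact.

Lemma RiemannInt_ge_const (g : R -> R) a b c (pr : Riemann_integrable g a b) :
  a <= b -> (forall s, a < s < b -> c <= g s) -> c * (b - a) <= RiemannInt pr.
Proof.
  intros Hab Hc. rewrite <- (RiemannInt_P15 (RiemannInt_P14 a b c)).
  now apply RiemannInt_P19.
Qed.

Lemma RiemannInt_le_const (g : R -> R) a b c (pr : Riemann_integrable g a b) :
  a <= b -> (forall s, a < s < b -> g s <= c) -> RiemannInt pr <= c * (b - a).
Proof.
  intros Hab Hc. rewrite <- (RiemannInt_P15 (RiemannInt_P14 a b c)).
  now apply RiemannInt_P19.
Qed.

(* If [a < b] the integral over [a, t] would exceed the one over [b, 0] by the
   integral over [a, b], which is at least [c (b - a) > 0]. *)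
Lemma le_of_RiemannInt_eq (g h : R -> R) a b t c
  (pr1 : Riemann_integrable g a t) (pr2 : Riemann_integrable h b 0) :
  b <= 0 <= t -> 0 < c ->
  (forall s, s <= 0 -> g s = h s) ->
  (forall s, 0 < s < t -> 0 <= g s) ->
  (forall s, a < s < b -> c <= g s) ->
  RiemannInt pr1 = RiemannInt pr2 -> b <= a.
Proof.
  intros Hb Hc Hgh Hg0 Hgc Heq. apply Rnot_lt_le. intros Hab.
  assert (Hsplit1 : a <= b <= t) by lra.
  pose (pr_ab := RiemannInt_P22 pr1 Hsplit1). pose (pr_bt := RiemannInt_P23 pr1 Hsplit1).
  assert (Hsplit2 : b <= 0 <= t) by lra.
  pose (pr_b0 := RiemannInt_P22 pr_bt Hsplit2). pose (pr_0t := RiemannInt_P23 pr_bt Hsplit2).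
  pose proof (RiemannInt_P26 pr_ab pr_bt pr1) as E1.
  pose proof (RiemannInt_P26 pr_b0 pr_0t pr_bt) as E2.
  assert (E3 : RiemannInt pr_b0 = RiemannInt pr2)
    by (apply RiemannInt_P18; [lra | intros s Hs; apply Hgh; lra]).
  pose proof (RiemannInt_ge_const g 0 t 0 pr_0t (proj2 Hb) Hg0).
  pose proof (RiemannInt_ge_const g a b c pr_ab (Rlt_le _ _ Hab) Hgc).
  assert (0 < c * (b - a)) by (apply Rmult_lt_0_compat; lra).
  lra.
Qed.

Section Antitone.
Variables (n : nat) (Omega : (nat -> R) -> Prop) (f : (sig Omega -> R) -> (sig Omega -> R)).
Hypothesis Hf_dec : forall u v, contC n u -> contC n v ->
  (forall x, u x <= v x) -> forall x, f v x <= f u x.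

Lemma antitone_const_bounds (u : sig Omega -> R) K x :
  contC n u -> (forall y, Rabs (u y) <= K) ->
  f (constC K) x <= f u x <= f (constC (- K)) x.
Proof.
  intros Hu HK. split; apply Hf_dec; auto using contC_const;
    intro y; unfold constC; specialize (HK y);
    pose proof (Rle_abs (u y)); pose proof (Rle_abs (- u y)); rewrite Rabs_Ropp in *; lra.
Qed.

Lemma RiemannInt_antitone_bounds (u : R -> sig Omega -> R) K x a b
  (pr : Riemann_integrable (fun s => f (u s) x) a b) :
  a <= b -> (forall s, a < s < b -> contC n (u s) /\ forall y, Rabs (u s y) <= K) ->
  f (constC K) x * (b - a) <= RiemannInt pr <= f (constC (- K)) x * (b - a).
Proof.
  intros Hab Hu. split.
  - apply RiemannInt_ge_const; [exact Hab|]. intros s Hs.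
    apply antitone_const_bounds; apply Hu, Hs.
  - apply RiemannInt_le_const; [exact Hab|]. intros s Hs.
    apply antitone_const_bounds; apply Hu, Hs.
Qed.

End Antitone.

Section RangeRatio.
Variables (T : Type) (g h : T -> R).
Hypotheses (Hg : forall y, 0 <= g y) (Hh : forall y, 0 < h y).

Lemma Rinf_div_Rsup_le c B x : (forall y, h y <= B) -> 0 <= c -> g x <= h x * c ->
  Rinf (fun z => exists y, z = g y) / Rsup (fun z => exists y, z = h y) <= c.
Proof.
  intros HB Hc Hx.
  pose proof (Rinf_range_le T g 0 x Hg) as Hinf.
  pose proof (le_Rsup_range T h B x HB) as Hsup.
  pose proof (Hh x).
  apply (Rmult_le_reg_r (Rsup (fun z => exists y, z = h y))); [lra|].
  unfold Rdiv. rewrite Rmult_assoc, Rinv_l, Rmult_1_r by lra.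
  pose proof (Rmult_le_compat_r c _ _ Hc Hsup). lra.
Qed.

Lemma le_Rsup_div_Rinf c B x : (forall y, g y <= B) -> 0 < Rinf (fun z => exists y, z = h y) ->
  0 <= c -> h x * c <= g x ->
  c <= Rsup (fun z => exists y, z = g y) / Rinf (fun z => exists y, z = h y).
Proof.
  intros HB Hinf0 Hc Hx.
  pose proof (le_Rsup_range T g B x HB) as Hsup.
  pose proof (Rinf_range_le T h 0 x (fun y => Rlt_le _ _ (Hh y))) as Hinf.
  apply (Rmult_le_reg_r (Rinf (fun z => exists y, z = h y))); [exact Hinf0|].
  unfold Rdiv. rewrite Rmult_assoc, Rinv_l, Rmult_1_r by lra.
  pose proof (Rmult_le_compat_r c _ _ Hc Hinf). lra.
Qed.

Lemma Rinf_div_Rsup_nonneg B : inhabited T -> (forall y, h y <= B) ->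
  0 <= Rinf (fun z => exists y, z = g y) / Rsup (fun z => exists y, z = h y).
Proof.
  intros Hinh HB. destruct Hinh as [x].
  pose proof (le_Rinf_range T g 0 (inhabits x) Hg).
  pose proof (le_Rsup_range T h B x HB). pose proof (Hh x).
  unfold Rdiv. apply Rmult_le_pos; [lra|]. left. apply Rinv_0_lt_compat. lra.
Qed.

End RangeRatio.

Lemma below_le (r : option R) s t : below r t -> s <= t -> below r s.
Proof. destruct r; simpl; lra. Qed.

Section Delay.
Context {n : nat} {Omega : (nat -> R) -> Prop} {f : (sig Omega -> R) -> (sig Omega -> R)}
  {Mf : R} {phi A tau : R -> sig Omega -> R} {tau0 : sig Omega -> R} {r : option R}.
Hypotheses (HOmega : compact_in_Rn n Omega) (Hinh : inhabited (sig Omega)).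
Hypothesis Hf_bnd : forall u, contC n u -> forall x, 0 < f u x <= Mf.
Hypothesis Hf_dec : forall u v, contC n u -> contC n v ->
  (forall x, u x <= v x) -> forall x, f v x <= f u x.
Hypotheses (Hphi : cont_into_C n (fun t => t <= 0) phi) (HA : cont_into_C n (below r) A)
  (HAphi : forall t, t <= 0 -> forall x, A t x = phi t x).
Hypotheses (Htau0_pos : forall x, 0 <= tau0 x)
  (Htau_pos : forall t x, 0 <= t -> below r t -> 0 <= tau t x).
Hypothesis Htau_eq : forall t x, 0 <= t -> below r t ->
  exists (pr1 : Riemann_integrable (fun s => f (A s) x) (t - tau t x) t)
         (pr2 : Riemann_integrable (fun s => f (phi s) x) (- tau0 x) 0),
    RiemannInt pr1 = RiemannInt pr2.

Lemma A_eq_phi s : s <= 0 -> A s = phi s.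
Proof. intros Hs. apply functional_extensionality. auto. Qed.

Lemma contC_A s t : below r t -> s <= t -> contC n (A s).
Proof. intros Ht Hs. apply (proj1 HA). eapply below_le; eauto. Qed.

Lemma delay_lag_ge t x : 0 <= t -> below r t -> - tau0 x <= t - tau t x.
Proof.
  intros Ht Hrt. destruct (Htau_eq t x Ht Hrt) as [pr1 [pr2 Heq]].
  pose proof (Htau0_pos x).
  destruct (cont_into_C_supnorm_bounded n Omega HOmega Hinh _ phi (t - tau t x) 0 Hphi)
    as [K HK]; [intros; lra|].
  apply (le_of_RiemannInt_eq _ _ _ _ _ (f (constC K) x) pr1 pr2); [lra | | | | | exact Heq].
  - apply Hf_bnd, contC_const.
  - intros s Hs. now rewrite A_eq_phi.
  - intros s Hs. left. apply Hf_bnd. apply (contC_A s t Hrt). lra.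
  - intros s Hs. rewrite A_eq_phi by lra.
    assert (Hphis : contC n (phi s)) by (apply (proj1 Hphi); lra).
    apply (antitone_const_bounds n Omega f Hf_dec _ _ _ Hphis). intro y.
    eapply Rle_trans; [apply (contC_Rabs_le_supnorm n Omega HOmega _ _ Hphis) | apply HK; lra].
Qed.

Lemma delay_sandwich t x K0 K : 0 <= t -> below r t -> K0 <= K ->
  (forall s, - tau0 x <= s <= 0 -> forall y, Rabs (phi s y) <= K0) ->
  (forall s, 0 <= s <= t -> forall y, Rabs (A s y) <= K) ->
  tau0 x * f (constC K0) x <= f (constC (- K)) x * tau t x /\
  f (constC K) x * tau t x <= tau0 x * f (constC (- K0)) x.
Proof.
  intros Ht Hrt HK0K Hphi_K0 HA_K.
  destruct (Htau_eq t x Ht Hrt) as [pr1 [pr2 Heq]].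
  pose proof (Htau0_pos x). pose proof (Htau_pos t x Ht Hrt).
  pose proof (delay_lag_ge t x Ht Hrt) as Hlag.
  destruct (RiemannInt_antitone_bounds n Omega f Hf_dec A K x _ _ pr1) as [I1 I2]; [lra| |].
  { intros s Hs. split; [apply (contC_A s t Hrt); lra|]. intro y.
    destruct (Rle_lt_dec 0 s); [apply HA_K; lra|].
    rewrite A_eq_phi by lra. pose proof (Hphi_K0 s ltac:(lra) y). lra. }
  destruct (RiemannInt_antitone_bounds n Omega f Hf_dec phi K0 x _ _ pr2) as [J1 J2]; [lra| |].
  { intros s Hs. split; [apply (proj1 Hphi); lra | apply Hphi_K0; lra]. }
  replace (t - (t - tau t x)) with (tau t x) in * by ring.
  replace (0 - - tau0 x) with (tau0 x) in * by ring.
  rewrite !(Rmult_comm (tau0 x)). lra.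
Qed.

End Delay.

Theorem lemma3p8
  (n : nat) (Omega : (nat -> R) -> Prop)
  (HOmega : compact_in_Rn n Omega) (Hne : exists x, Omega x)
  (f : (sig Omega -> R) -> (sig Omega -> R)) (Mf : R)
  (Hf_C : forall u, contC n u -> contC n (f u))
  (Hf_lip : exists L, forall u v, contC n u -> contC n v ->
      supnorm (fun x => f u x - f v x) <= L * supnorm (fun x => u x - v x))
  (Hf_bnd : forall u, contC n u -> forall x, 0 < f u x <= Mf)
  (Hf_dec : forall u v, contC n u -> contC n v ->
      (forall x, u x <= v x) -> forall x, f v x <= f u x)
  (phi : R -> sig Omega -> R) (tau0 : sig Omega -> R)
  (Hphi : cont_into_C n (fun t => t <= 0) phi)
  (Htau0 : contC n tau0) (Htau0_pos : forall x, 0 <= tau0 x)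
  (r : option R) (Hr : pos_ext r)
  (A : R -> sig Omega -> R)
  (HA : cont_into_C n (below r) A)
  (HAphi : forall t, t <= 0 -> forall x, A t x = phi t x)
  (tau : R -> sig Omega -> R)
  (Htau_C : forall t, 0 <= t -> below r t -> contC n (tau t))
  (Htau_pos : forall t x, 0 <= t -> below r t -> 0 <= tau t x)
  (Htau_eq : forall t x, 0 <= t -> below r t ->
      exists (pr1 : Riemann_integrable (fun s => f (A s) x) (t - tau t x) t)
             (pr2 : Riemann_integrable (fun s => f (phi s) x) (- tau0 x) 0),
        RiemannInt pr1 = RiemannInt pr2)
  (M : R) (HM : 0 < M)
  (HAM : forall t, 0 <= t -> below r t -> supnorm (A t) <= M) :
  let tau0_inf := Rsup (fun y => exists x, y = tau0 x) in
  let phi_max := Rsup (fun y => exists t, - tau0_inf <= t <= 0 /\ y = supnorm (phi t)) in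
  let M1 := Rmax M phi_max in
  let tau_min := Rinf (fun y => exists x, y = tau0 x * f (constC phi_max) x)
                 / Rsup (fun y => exists x, y = f (constC (- M1)) x) in
  let tau_max := Rsup (fun y => exists x, y = tau0 x * f (constC (- phi_max)) x)
                 / Rinf (fun y => exists x, y = f (constC M1) x) in
  0 <= tau_min /\
  forall t x, 0 <= t -> below r t -> tau_min <= tau t x <= tau_max.
Proof.
  intros tau0_inf phi_max M1 tau_min tau_max.
  assert (Hinh : inhabited (sig Omega))
    by (destruct Hne as [x Hx]; exact (inhabits (exist _ x Hx))).
  assert (Hf_const : forall c x, 0 < f (@constC Omega c) x <= Mf)
    by (intros; apply Hf_bnd, contC_const).
  assert (Htau0_le : forall x, tau0 x <= tau0_inf)
    by (intro x; exact (contC_le_Rsup_range n Omega HOmega tau0 x Htau0)).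
  assert (Htau0_f_nonneg : forall x, 0 <= tau0 x * f (constC phi_max) x)
    by (intro x; apply Rmult_le_pos; [apply Htau0_pos | apply Rlt_le, Hf_const]).
  split; [apply Rinf_div_Rsup_nonneg with Mf; auto; apply Hf_const|].
  intros t x Ht Hrt.
  assert (Hphi_win : forall s, - tau0 x <= s <= 0 -> forall y, Rabs (phi s y) <= phi_max).
  { intros s Hs y. pose proof (Htau0_le x).
    apply (Rabs_le_Rsup_supnorm n Omega HOmega Hinh (fun t => t <= 0) phi);
      [exact Hphi | intros; lra | lra]. }
  assert (HA_win : forall s, 0 <= s <= t -> forall y, Rabs (A s y) <= M1).
  { intros s Hs y. apply Rle_trans with M; [|apply Rmax_l].
    assert (Hrs : below r s) by (apply below_le with t; [exact Hrt | lra]).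
    eapply Rle_trans; [apply (contC_Rabs_le_supnorm n Omega HOmega), (proj1 HA), Hrs|].
    apply HAM; [lra | exact Hrs]. }
  destruct (delay_sandwich HOmega Hinh Hf_bnd Hf_dec Hphi HA HAphi Htau0_pos Htau_pos Htau_eq
              t x phi_max M1 Ht Hrt (Rmax_r _ _) Hphi_win HA_win) as [Hlo Hhi].
  pose proof (Htau_pos t x Ht Hrt). split.
  - apply Rinf_div_Rsup_le with Mf x; auto; apply Hf_const.
  - apply le_Rsup_div_Rinf with (tau0_inf * Mf) x; auto; try apply Hf_const.
    + intro y. pose proof (Hf_const (- phi_max) y). apply Rmult_le_compat; auto; lra.
    + apply (contC_Rinf_range_pos n Omega HOmega Hinh); auto using contC_const; apply Hf_const.
Qed.
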